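(* Let $A\in\mathbb{C}^{n\times n}$, $B\in\mathbb{C}^{n\times m}$, $C\in\mathbb{C}^{p\times n}$, $D\in\mathbb{C}^{p\times m}$, $F\in\mathbb{C}^{\nu\times\nu}$ with $\mathrm{eig}(A)\cap\mathrm{eig}(F)=\emptyset$. Then for all $H\in\mathbb{C}^{m\times\nu}$ and $G\in\mathbb{C}^{\nu\times p}$, $$\mathcal{C}_{\rm p}(H)=\sum_{k=1}^{l}\sum_{j=0}^{m_k-1}(-1)^j\mathcal{M}_j(\lambda_k)\,H\,X_{k,j},\qquad \mathcal{C}_{\rm d}(G)=\sum_{k=1}^{l}\sum_{j=0}^{m_k-1}(-1)^j X_{k,j}\,G\,\mathcal{M}_j(\lambda_k).$$
   Context: The steady-state cascade (SSC) operators are defined as follows: for $H\in\mathbb{C}^{m\times\nu}$, $\mathcal{C}_{\rm p}(H)=C\Pi+DH$, where $\Pi\in\mathbb{C}^{n\times\nu}$ is the unique solution of the Sylvester equation $\Pi F - A\Pi = BH$; for $G\in\mathbb{C}^{\nu\times p}$, $\mathcal{C}_{\rm d}(G)=-MB+GD$, where $M\in\mathbb{C}^{\nu\times n}$ is the unique solution of $MA-FM=GC$. Transfer matrix $\hat\Sigma(s)=C(sI_n-A)^{-1}B+D$. For $k\in\mathbb{Z}_{\ge0}$ and $s_0\notin\mathrm{eig}(A)$, the $k$-th moment matrix is $\mathcal{M}_k(s_0)=\frac{(-1)^k}{k!}\frac{d^k}{ds^k}\hat\Sigma(s)\big|_{s=s_0}\in\mathbb{C}^{p\times m}$; equivalently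 $\mathcal{M}_0(s_0)=\hat\Sigma(s_0)$ and $\mathcal{M}_k(s_0)=C(s_0I_n-A)^{-(k+1)}B$ for $k\ge1$. Let $\lambda_1,\dots,\lambda_l$ be the distinct eigenvalues of $F$ with algebraic multiplicities $m_1,\dots,m_l$. Let $F=V\mathcal{J}V^{-1}$ be a Jordan decomposition with $\mathcal{J}=\mathrm{diag}(\mathcal{J}_1,\dots,\mathcal{J}_l)$, where $\mathcal{J}_k\in\mathbb{C}^{m_k\times m_k}$ collects the Jordan blocks for $\lambda_k$, written $\mathcal{J}_k=\lambda_kI_{m_k}+N_k$ with $N_k$ nilpotent. Partition $V=[V_1\ \cdots\ V_l]$ with $V_k\in\mathbb{C}^{\nu\times m_k}$ and $V^{-1}=\mathrm{col}(W_1^*,\dots,W_l^* )$ with $W_k\in\mathbb{C}^{\nu\times m_k}$ ($^*$ = conjugate transpose). Define $X_{k,j}=V_kN_k^jW_k^*\in\mathbb{C}^{\nu\times\nu}$ for $j\in\{0,\dots,m_k-1\}$. *)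

(* Complex numbers are modelled as R[i] (mathcomp-real-closed
   `complex`) over an arbitrary real number field R : realType, so R[i] = C. *)
From HB Require Import structures.
From mathcomp Require Import all_boot all_order all_algebra.
From mathcomp Require Import complex.
From mathcomp Require Import reals.
Set Implicit Arguments. Unset Strict Implicit. Unset Printing Implicit Defensive.
Import Order.TTheory GRing.Theory Num.Theory.
Local Open Scope ring_scope.

Section SSC.
Variable R : realType.
Local Notation C := (R[i]).

Definition ctrmx (q r : nat) (W : 'M[C]_(q, r)) : 'M[C]_(r, q) :=
  (map_mx (@conjc R) W)^T.

Definition transfer (n m p : nat) (A : 'M[C]_n) (B : 'M[C]_(n, m))
  (Cm : 'M[C]_(p, n)) (D : 'M[C]_(p, m)) (s : C) : 'M[C]_(p, m) :=
  Cm *m invmx (s%:M - A) *m B + D.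

(* k-th moment at s0 (s0 not an eigenvalue of A), in the equivalent form
   M_0(s0) = Sigma(s0), M_k(s0) = C (s0 I - A)^{-(k+1)} B for k >= 1. *)
Definition moment (n m p : nat) (A : 'M[C]_n) (B : 'M[C]_(n, m))
  (Cm : 'M[C]_(p, n)) (D : 'M[C]_(p, m)) (k : nat) (s0 : C) : 'M[C]_(p, m) :=
  if k == 0%N then transfer A B Cm D s0
  else Cm *m (invmx (s0%:M - A)) ^+ k.+1 *m B.

Definition is_Cp (n m p nu : nat) (A : 'M[C]_n) (B : 'M[C]_(n, m))
  (Cm : 'M[C]_(p, n)) (D : 'M[C]_(p, m)) (F : 'M[C]_nu)
  (H : 'M[C]_(m, nu)) (Y : 'M[C]_(p, nu)) : Prop :=
  exists Pi : 'M[C]_(n, nu),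
    [/\ Pi *m F - A *m Pi = B *m H,
        (forall Pi' : 'M[C]_(n, nu), Pi' *m F - A *m Pi' = B *m H -> Pi' = Pi)
      & Y = Cm *m Pi + D *m H].

Definition is_Cd (n m p nu : nat) (A : 'M[C]_n) (B : 'M[C]_(n, m))
  (Cm : 'M[C]_(p, n)) (D : 'M[C]_(p, m)) (F : 'M[C]_nu)
  (G : 'M[C]_(nu, p)) (Y : 'M[C]_(nu, m)) : Prop :=
  exists M : 'M[C]_(nu, n),
    [/\ M *m A - F *m M = G *m Cm,
        (forall M' : 'M[C]_(nu, n), M' *m A - F *m M' = G *m Cm -> M' = M)
      & Y = - M *m B + G *m D].

(* N is the nilpotent part of a direct sum of Jordan blocks (all for the same
   eigenvalue): its only nonzero entries are ones on the superdiagonal. *)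
Definition jordan_nil (q : nat) (N : 'M[C]_q) : Prop :=
  forall i j : 'I_q, N i j = 0 \/ ((j : nat) = i.+1 /\ N i j = 1).

End SSC.

(* Conjugating by the Jordan basis of [F] splits the Sylvester equation
   [Pi F - A Pi = B H] into one equation per eigenvalue, [U P + P N_k = B H V_k]
   with [U = lam_k I - A] and [N_k] nilpotent (and dually for [M A - F M = G C],
   which is the transpose of an equation of the same kind).  As [lam_k] is not an
   eigenvalue of [A], [U] is invertible and the block equation is solved by the
   finite series [sum_j (-1)^j U^-(j+1) B H V_k N_k^j]; the powers [U^-(j+1)]
   are exactly what the moments [M_j(lam_k)] are made of. *)

From HB Require Import structures.
From mathcomp Require Import all_boot all_order all_algebra.
From mathcomp Require Import complex.
From mathcomp Require Import reals.
Set Implicit Arguments. Unset Strict Implicit. Unset Printing Implicit Defensive.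
Import Order.TTheory GRing.Theory Num.Theory.
Local Open Scope ring_scope.

Lemma trmxX (K : comPzRingType) (q j : nat) (N : 'M[K]_q) : (N ^+ j)^T = N^T ^+ j.
Proof.
elim: j => [|j IH]; first by rewrite !expr0 trmx1.
by rewrite exprS exprSr -!mulmxE trmx_mul IH.
Qed.

Section NilpotentSylvester.
Variables (K : comUnitRingType) (n q e : nat) (U : 'M[K]_n) (N : 'M[K]_q).
Hypotheses (U_unit : U \in unitmx) (N_nil : N ^+ e = 0).

(* The unique solution of [U X + X N = Y] for invertible [U] and [N ^+ e = 0]:
   iterate [X = U^-1 (Y - X N)] until the power of [N] vanishes. *)
Definition sylvester_series (Y : 'M[K]_(n, q)) : 'M[K]_(n, q) :=
  \sum_(j < e) (-1) ^+ j *: (invmx U ^+ j.+1 *m Y *m N ^+ j).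

Definition sylvester_series_dual (Z : 'M[K]_(q, n)) : 'M[K]_(q, n) :=
  \sum_(j < e) (-1) ^+ j *: (N ^+ j *m Z *m invmx U ^+ j.+1).

Lemma sylvester_series_sol Y :
  U *m sylvester_series Y + sylvester_series Y *m N = Y.
Proof.
pose f j := - ((-1) ^+ j *: (invmx U ^+ j *m Y *m N ^+ j)).
rewrite mulmx_sumr mulmx_suml -big_split /= (eq_bigr (fun j : 'I_e => f j.+1 - f j)).
  rewrite -(big_mkord xpredT (fun j => f j.+1 - f j)) telescope_sumr //.
  by rewrite /f N_nil mulmx0 scaler0 oppr0 expr0 scale1r mul1mx mulmx1 sub0r opprK.
move=> j _; rewrite /f opprK [(-1) ^+ j.+1]exprS mulN1r scaleNr opprK addrC.
congr (_ + _); rewrite -?scalemxAr -?scalemxAl; congr (_ *: _).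
  by rewrite [N ^+ j.+1]exprSr -mulmxE mulmxA.
by rewrite !mulmxA [invmx U ^+ j.+1]exprS -mulmxE mulmxA mulmxV ?mul1mx.
Qed.

Lemma sylvester_nil_eq0 Z : U *m Z + Z *m N = 0 -> Z = 0.
Proof.
move=> /(congr1 (mulmx (invmx U))); rewrite mulmx0 mulmxDr mulmxA mulVmx // mul1mx.
move=> /eqP; rewrite addr_eq0 => /eqP Z_step.
have Z_iter j : Z = (-1) ^+ j *: (invmx U ^+ j *m Z *m N ^+ j).
  elim: j => [|j IH]; first by rewrite !expr0 scale1r mul1mx mulmx1.
  rewrite {1}IH {1}Z_step mulmxN mulNmx scalerN -scaleNr -mulN1r -exprS.
  by congr (_ *: _); rewrite exprSr [N ^+ j.+1]exprS -!mulmxE !mulmxA.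
by rewrite (Z_iter e) N_nil mulmx0 scaler0.
Qed.

Lemma sylvester_seriesP X Y :
  U *m X + X *m N = Y <-> X = sylvester_series Y.
Proof.
split=> [XY|->]; last exact: sylvester_series_sol.
apply/eqP; rewrite -subr_eq0; apply/eqP/sylvester_nil_eq0.
by rewrite mulmxBr mulmxBl addrACA -opprD sylvester_series_sol XY subrr.
Qed.

End NilpotentSylvester.

Lemma trmx_sylvester_series (K : comUnitRingType) (n q e : nat)
    (U : 'M[K]_n) (N : 'M[K]_q) (Z : 'M[K]_(q, n)) :
  (sylvester_series e U^T N^T Z^T)^T = sylvester_series_dual e U N Z.
Proof.
rewrite linear_sum; apply: eq_bigr => j _.
by rewrite linearZ /= !trmx_mul !trmxX trmx_inv !trmxK mulmxA.
Qed.

Lemma sylvester_series_dualP (K : comUnitRingType) (n q e : nat)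
    (U : 'M[K]_n) (N : 'M[K]_q) (X Z : 'M[K]_(q, n)) :
    U \in unitmx -> N ^+ e = 0 ->
  X *m U + N *m X = Z <-> X = sylvester_series_dual e U N Z.
Proof.
move=> U_unit N_nil; rewrite -trmx_sylvester_series.
apply: (iff_trans (B := U^T *m X^T + X^T *m N^T = Z^T)).
  by rewrite -!trmx_mul -linearD; split=> [->|/trmx_inj].
have UT_unit : U^T \in unitmx by rewrite unitmx_tr.
have NT_nil : N^T ^+ e = 0 by rewrite -trmxX N_nil trmx0.
apply: iff_trans (sylvester_seriesP UT_unit NT_nil X^T Z^T) _.
by split=> [<-|->]; rewrite trmxK.
Qed.

Lemma sylvester_series_dualN (K : comUnitRingType) (n q e : nat)
    (U : 'M[K]_n) (N : 'M[K]_q) (Z : 'M[K]_(q, n)) :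
  sylvester_series_dual e U N (- Z) = - sylvester_series_dual e U N Z.
Proof.
by rewrite -sumrN; apply: eq_bigr => j _; rewrite mulmxN mulNmx scalerN.
Qed.

Lemma sylvester_shift (K : comPzRingType) (n q : nat) (A : 'M[K]_n) (a : K)
    (N : 'M[K]_q) (P : 'M[K]_(n, q)) :
  P *m (a%:M + N) - A *m P = (a%:M - A) *m P + P *m N.
Proof. by rewrite mulmxDr mul_mx_scalar mulmxBl mul_scalar_mx addrAC. Qed.

Lemma sylvester_shift_dual (K : comPzRingType) (n q : nat) (A : 'M[K]_n) (a : K)
    (N : 'M[K]_q) (Q : 'M[K]_(q, n)) :
  Q *m A - (a%:M + N) *m Q = - (Q *m (a%:M - A) + N *m Q).
Proof. by rewrite mulmxDl mul_scalar_mx mulmxBr mul_mx_scalar [RHS]opprD opprB opprD addrA. Qed.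

Lemma superdiag_nilpotent (K : pzSemiRingType) (q : nat) (N : 'M[K]_q) :
  (forall i j : 'I_q, (j : nat) != i.+1 -> N i j = 0) -> N ^+ q = 0.
Proof.
move=> N_sup.
have expr_sup k (i j : 'I_q) : (j : nat) != (i + k)%N -> (N ^+ k) i j = 0.
  elim: k i j => [|k IH] i j; first by rewrite addn0 expr0 mxE -val_eqE eq_sym => /negbTE ->.
  move=> j_neq; rewrite exprSr mxE big1 // => h _.
  have [h_eq|h_neq] := eqVneq (h : nat) (i + k)%N; last by rewrite IH ?mul0r.
  by rewrite N_sup ?mulr0 // h_eq -addnS.
by apply/matrixP => i j; rewrite mxE expr_sup // neq_ltn (leq_trans (ltn_ord j)) ?leq_addl.
Qed.

Lemma jordan_nil_superdiag (R : realType) (q : nat) (N : 'M[R[i]]_q) :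
  jordan_nil N -> forall i j : 'I_q, (j : nat) != i.+1 -> N i j = 0.
Proof. by move=> N_J i j; case: (N_J i j) => [//|[-> _]]; rewrite eqxx. Qed.

Lemma unitmx_sub_scalar (K : fieldType) (n : nat) (A : 'M[K]_n) (a : K) :
  (a%:M - A \in unitmx) = ~~ eigenvalue A a.
Proof.
rewrite unitmxE unitfE; congr (~~ _).
apply/det0P/eigenvalueP => [[v v_nz Av_av]|[v Av_av v_nz]]; exists v => //.
  by apply/eqP; rewrite -mul_mx_scalar eq_sym -subr_eq0 -mulmxBr Av_av.
by rewrite mulmxBr Av_av mul_mx_scalar subrr.
Qed.

Lemma eigenvalue_jordan_block (K : fieldType) (q nu : nat) (F : 'M[K]_nu)
    (X : 'M[K]_(q, nu)) (Y : 'M[K]_(nu, q)) (a : K) (N : 'M[K]_q) :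
    (0 < q)%N -> (forall i j : 'I_q, (j : nat) != i.+1 -> N i j = 0) ->
    X *m Y = 1%:M -> X *m F = (a%:M + N) *m X ->
  eigenvalue F a.
Proof.
(* The last row of [X] is a left eigenvector, since the last row of [N] is zero. *)
move=> q_gt0 N_sup XY XF; have last_lt : (q.-1 < q)%N by rewrite prednK.
pose i := Ordinal last_lt.
have Ni0 : row i N = 0.
  by apply/rowP => j; rewrite !mxE N_sup //= prednK // neq_ltn ltn_ord.
apply/eigenvalueP; exists (row i X).
  by rewrite -row_mul XF mulmxDl mul_scalar_mx linearD /= row_mul Ni0 mul0mx addr0 linearZ.
apply/eqP => Xi0; have := congr1 (row i) XY.
rewrite /= row_mul Xi0 mul0mx => /rowP/(_ i).
by rewrite !mxE eqxx => /eqP; rewrite eq_sym oner_eq0.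
Qed.

Section BlockDiagonalization.
Variables (K : pzRingType) (nu l : nat) (q_ : 'I_l -> nat) (F : 'M[K]_nu).
Variables (V : forall k, 'M[K]_(nu, q_ k)) (Wt : forall k, 'M[K]_(q_ k, nu)).
Variable J : forall k, 'M[K]_(q_ k).
Hypotheses (VW : \mxrow_k V k *m \mxcol_k Wt k = 1%:M)
  (WV : \mxcol_k Wt k *m \mxrow_k V k = 1%:M)
  (FE : F = \mxrow_k V k *m \mxdiag_k J k *m \mxcol_k Wt k).

Lemma sum_mulmx_V_Wt : \sum_k V k *m Wt k = 1%:M.
Proof. by rewrite -mul_mxrow_mxcol. Qed.

Lemma mulmx_Wt_V k : Wt k *m V k = 1%:M.
Proof.
have := congr1 (fun X => submxblock X k k) WV.
by rewrite /= mul_mxcol_mxrow mxblockK -(mxdiagZ 1) submxblock_diag.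
Qed.

Lemma mulmx_F_V k : F *m V k = V k *m J k.
Proof.
have : F *m \mxrow_k V k = \mxrow_k (V k *m J k).
  by rewrite FE -!mulmxA WV mulmx1 mul_mxrow_mxdiag.
by move/(congr1 (fun X => submxrow X k)); rewrite -mul_submxrow !mxrowK.
Qed.

Lemma mulmx_Wt_F k : Wt k *m F = J k *m Wt k.
Proof.
have : \mxcol_k Wt k *m F = \mxcol_k (J k *m Wt k).
  by rewrite FE !mulmxA WV mul1mx mul_mxdiag_mxcol.
by move/(congr1 (fun X => submxcol X k)); rewrite -submxcol_mul !mxcolK.
Qed.

Variables (n : nat) (A : 'M[K]_n).

Lemma sylvester_blocksP (Y : 'M[K]_(n, nu)) (S : forall k, 'M[K]_(n, q_ k)) :
    (forall k (P : 'M_(n, q_ k)), P *m J k - A *m P = Y *m V k <-> P = S k) ->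
  forall Pi : 'M_(n, nu), Pi *m F - A *m Pi = Y <-> Pi = \sum_k S k *m Wt k.
Proof.
move=> blockP Pi; split=> [PiY|->].
  rewrite -[Pi]mulmx1 -sum_mulmx_V_Wt mulmx_sumr; apply: eq_bigr => k _.
  rewrite mulmxA; congr (_ *m _); apply/blockP.
  by rewrite -mulmxA -mulmx_F_V mulmxA [A *m _]mulmxA -mulmxBl PiY.
rewrite mulmx_suml mulmx_sumr -sumrB -[Y]mulmx1 -sum_mulmx_V_Wt mulmx_sumr.
apply: eq_bigr => k _; rewrite -mulmxA mulmx_Wt_F mulmxA [A *m _]mulmxA -mulmxBl.
by rewrite (proj2 (blockP k _) erefl) mulmxA.
Qed.

Lemma sylvester_dual_blocksP (Z : 'M[K]_(nu, n)) (T : forall k, 'M[K]_(q_ k, n)) :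
    (forall k (Q : 'M_(q_ k, n)), Q *m A - J k *m Q = Wt k *m Z <-> Q = T k) ->
  forall M : 'M_(nu, n), M *m A - F *m M = Z <-> M = \sum_k V k *m T k.
Proof.
move=> blockP M; split=> [MZ|->].
  rewrite -[M]mul1mx -sum_mulmx_V_Wt mulmx_suml; apply: eq_bigr => k _.
  rewrite -mulmxA; congr (_ *m _); apply/blockP.
  by rewrite mulmxA -mulmx_Wt_F -!mulmxA -mulmxBr MZ.
rewrite mulmx_suml mulmx_sumr -sumrB -[Z]mul1mx -sum_mulmx_V_Wt mulmx_suml.
apply: eq_bigr => k _; rewrite mulmxA mulmx_F_V -!mulmxA -mulmxBr.
by rewrite (proj2 (blockP k _) erefl).
Qed.

End BlockDiagonalization.

Section SteadyStateCascade.
Variables (R : realType) (n m p nu : nat).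
Variables (A : 'M[R[i]]_n) (B : 'M[R[i]]_(n, m)).
Variables (Cm : 'M[R[i]]_(p, n)) (D : 'M[R[i]]_(p, m)) (F : 'M[R[i]]_nu).

Lemma momentE (j : nat) (s : R[i]) :
  moment A B Cm D j s = Cm *m invmx (s%:M - A) ^+ j.+1 *m B + (j == 0)%:R *: D.
Proof. by rewrite /moment /transfer; case: j => [|j] /=; rewrite ?scale1r ?scale0r ?addr0. Qed.

Lemma moment_block_sum (q : nat) (s : R[i]) (N : 'M[R[i]]_q)
    (V : 'M[R[i]]_(nu, q)) (Wt : 'M[R[i]]_(q, nu)) (H : 'M[R[i]]_(m, nu)) :
    (0 < q)%N ->
  \sum_(j < q) (-1) ^+ j *: (moment A B Cm D j s *m H *m (V *m N ^+ j *m Wt))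
  = Cm *m (sylvester_series q (s%:M - A) N (B *m H *m V) *m Wt) + D *m H *m (V *m Wt).
Proof.
case: q N V Wt => // q N V Wt _.
rewrite (eq_bigr (fun j : 'I_q.+1 => Cm *m ((-1) ^+ j *: (invmx (s%:M - A) ^+ j.+1
      *m (B *m H *m V) *m N ^+ j)) *m Wt
    + ((j : nat) == 0)%:R *: ((-1) ^+ j *: (D *m H *m (V *m N ^+ j *m Wt))))) => [|j _].
  rewrite big_split /= -mulmx_suml -mulmx_sumr; congr (_ + _); first by rewrite mulmxA.
  rewrite big_ord_recl big1 => [|j _]; last by rewrite scale0r.
  by rewrite !expr0 !scale1r mulmx1 addr0.
rewrite momentE !mulmxDl scalerDr -!scalemxAl scalerA mulrC -scalerA; congr (_ + _).
by rewrite -scalemxAr -scalemxAl !mulmxA.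
Qed.

Lemma moment_block_sum_dual (q : nat) (s : R[i]) (N : 'M[R[i]]_q)
    (V : 'M[R[i]]_(nu, q)) (Wt : 'M[R[i]]_(q, nu)) (G : 'M[R[i]]_(nu, p)) :
    (0 < q)%N ->
  \sum_(j < q) (-1) ^+ j *: (V *m N ^+ j *m Wt *m G *m moment A B Cm D j s)
  = V *m sylvester_series_dual q (s%:M - A) N (Wt *m G *m Cm) *m B + V *m Wt *m G *m D.
Proof.
case: q N V Wt => // q N V Wt _.
rewrite (eq_bigr (fun j : 'I_q.+1 => V *m ((-1) ^+ j *: (N ^+ j *m (Wt *m G *m Cm)
      *m invmx (s%:M - A) ^+ j.+1)) *m B
    + ((j : nat) == 0)%:R *: ((-1) ^+ j *: (V *m N ^+ j *m Wt *m G *m D)))) => [|j _].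
  rewrite big_split /= -mulmx_suml -mulmx_sumr; congr (_ + _).
  rewrite big_ord_recl big1 => [|j _]; last by rewrite scale0r.
  by rewrite !expr0 !scale1r mulmx1 addr0.
rewrite momentE mulmxDr scalerDr -!scalemxAr scalerA mulrC -scalerA; congr (_ + _).
by rewrite -scalemxAl !mulmxA.
Qed.

Lemma is_Cp_unique (H : 'M[R[i]]_(m, nu)) (Pi0 : 'M[R[i]]_(n, nu)) :
    (forall Pi, Pi *m F - A *m Pi = B *m H <-> Pi = Pi0) ->
  is_Cp A B Cm D F H (Cm *m Pi0 + D *m H).
Proof. by move=> PiP; exists Pi0; split=> //; [apply/PiP | move=> Pi /PiP]. Qed.

Lemma is_Cd_unique (G : 'M[R[i]]_(nu, p)) (M0 : 'M[R[i]]_(nu, n)) :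
    (forall M, M *m A - F *m M = G *m Cm <-> M = M0) ->
  is_Cd A B Cm D F G (- M0 *m B + G *m D).
Proof. by move=> MP; exists M0; split=> //; [apply/MP | move=> M /MP]. Qed.

End SteadyStateCascade.

Theorem theorem3 (R : realType) (n m p nu : nat)
  (A : 'M[R[i]]_n) (B : 'M[R[i]]_(n, m)) (Cm : 'M[R[i]]_(p, n))
  (D : 'M[R[i]]_(p, m)) (F : 'M[R[i]]_nu)
  (hAF : forall a : R[i], eigenvalue A a -> ~~ eigenvalue F a)
  (l : nat) (lam : 'I_l -> R[i]) (mult : 'I_l -> nat)
  (V : forall k : 'I_l, 'M[R[i]]_(nu, mult k))
  (W : forall k : 'I_l, 'M[R[i]]_(nu, mult k))
  (N : forall k : 'I_l, 'M[R[i]]_(mult k))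
  (hlam : injective lam)
  (hmult : forall k, (0 < mult k)%N)
  (hsum : (\sum_(k < l) mult k)%N = nu)
  (hN : forall k, jordan_nil (N k))
  (hVW : (\mxrow_(k < l) V k) *m (\mxcol_(k < l) ctrmx (W k)) = 1%:M)
  (hWV : (\mxcol_(k < l) ctrmx (W k)) *m (\mxrow_(k < l) V k) = 1%:M)
  (hF : F = (\mxrow_(k < l) V k)
              *m (\mxdiag_(k < l) ((lam k)%:M + N k))
              *m (\mxcol_(k < l) ctrmx (W k))) :
  (forall H : 'M[R[i]]_(m, nu),
     is_Cp A B Cm D F H
       (\sum_(k < l) \sum_(j < mult k)
          ((-1) ^+ j *: (moment A B Cm D j (lam k) *m H
                          *m (V k *m (N k) ^+ j *m ctrmx (W k))))))
  /\
  (forall G : 'M[R[i]]_(nu, p),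
     is_Cd A B Cm D F G
       (\sum_(k < l) \sum_(j < mult k)
          ((-1) ^+ j *: ((V k *m (N k) ^+ j *m ctrmx (W k)) *m G
                          *m moment A B Cm D j (lam k))))).
Proof.
have N_sup k := jordan_nil_superdiag (hN k).
have N_nil k : N k ^+ mult k = 0 := superdiag_nilpotent (N_sup k).
have sum1 := sum_mulmx_V_Wt hVW.
have A_unit k : (lam k)%:M - A \in unitmx.
  rewrite unitmx_sub_scalar; apply/negP => /hAF/negP; apply.
  exact: eigenvalue_jordan_block (hmult k) (N_sup k) (mulmx_Wt_V hWV k) (mulmx_Wt_F hWV hF k).
split=> [H|G].
  rewrite (eq_bigr _ (fun k _ => moment_block_sum _ _ _ _ _ _ _ _ _ (hmult k))).
  rewrite big_split /= -mulmx_sumr -mulmx_sumr sum1 mulmx1.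
  apply: is_Cp_unique => Pi; apply: (sylvester_blocksP hVW hWV hF) => k P.
  by rewrite sylvester_shift; apply: sylvester_seriesP (A_unit k) (N_nil k) P _.
rewrite (eq_bigr _ (fun k _ => moment_block_sum_dual _ _ _ _ _ _ _ _ _ (hmult k))).
rewrite big_split /= -!mulmx_suml sum1 mul1mx -[X in X *m B]opprK -sumrN.
under eq_bigr do rewrite -mulmxN -sylvester_series_dualN.
apply: is_Cd_unique => M; apply: (sylvester_dual_blocksP hVW hWV hF) => k Q.
rewrite sylvester_shift_dual.
apply: iff_trans (sylvester_series_dualP Q _ (A_unit k) (N_nil k)).
by rewrite mulmxA; split=> [<-|->]; rewrite opprK.
Qed.
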